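(* Let $m\ge2$. There exist traceless $m\times m$ real matrices $A$ and $B$ such that, with \[ V_1(x)=Ax,\quad V_2(x)=Bx,\quad V_3(x)=\begin{pmatrix}0\\ \vdots\\ 0\\ 1\end{pmatrix},\quad V_4(x)=\begin{pmatrix}(x^m)^2\\ 0\\ \vdots\\ 0\end{pmatrix},\quad V_5(x)=\begin{pmatrix}x^1x^m\\ x^2x^m\\ \vdots\\ (x^m)^2\end{pmatrix} \] (where $x=(x^1,\ldots,x^m)$ and $V_5(x)=x^m\,x$), the Lie algebra $\mathrm{Lie}(V_1,\ldots,V_5)$ contains all polynomial vector fields on $\mathbb{R}^m$.
   Context: For smooth vector fields $U,V$ on $\mathbb{R}^m$, the Lie bracket is $[U,V](x)=DV(x)U(x)-DU(x)V(x)$, with $DU$ the Jacobian matrix. $\mathrm{Lie}(U_1,\ldots,U_d)$ is the smallest linear space of vector fields containing $U_1,\ldots,U_d$ and closed under Lie brackets. A polynomial vector field is one whose components are polynomials in $x^1,\ldots,x^m$. A traceless matrix is one with trace zero. *)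

From HB Require Import structures.
From mathcomp Require Import all_boot all_order all_algebra.
From mathcomp Require Import reals.
From mathcomp Require Import mpoly.

Set Implicit Arguments.
Unset Strict Implicit.
Unset Printing Implicit Defensive.

Import Order.TTheory GRing.Theory Num.Theory.
Local Open Scope ring_scope.

Section VF.
Variables (R : realType) (m : nat).

Definition pvf := 'I_m -> {mpoly R[m]}.

(* Jacobian entry DU(x)_{ij} = d U^i / d x^j is mderiv j (U i). *)
(* Lie bracket [U,V] = DV U - DU V. *)
Definition lie_bracket (U V : pvf) : pvf :=
  fun i => \sum_(j < m) (mderiv j (V i) * U j - mderiv j (U i) * V j).

(* Propositional membership in a list (functions are not an eqType). *)
Fixpoint mem_list (V : pvf) (s : seq pvf) : Prop :=
  if s is W :: s' then W = V \/ mem_list V s' else False.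

Inductive in_Lie (gens : seq pvf) : pvf -> Prop :=
| in_Lie_gen V : mem_list V gens -> in_Lie gens V
| in_Lie_zero : in_Lie gens (fun _ => 0)
| in_Lie_add U V : in_Lie gens U -> in_Lie gens V ->
    in_Lie gens (fun i => U i + V i)
| in_Lie_scale (c : R) U : in_Lie gens U -> in_Lie gens (fun i => c *: U i)
| in_Lie_bracket U V : in_Lie gens U -> in_Lie gens V ->
    in_Lie gens (lie_bracket U V).

(* The coordinate function x^(k+1) (0-based nat index k), 0 if k >= m. *)
Definition coordX (k : nat) : {mpoly R[m]} :=
  if insub k is Some i then 'X_i else 0.

Definition linear_vf (A : 'M[R]_m) : pvf :=
  fun i => \sum_(j < m) A i j *: 'X_j.

Definition V3 : pvf := fun i => if val i == m.-1 then 1 else 0.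
Definition V4 : pvf := fun i => if val i == 0%N then coordX m.-1 ^+ 2 else 0.
Definition V5 : pvf := fun i => coordX m.-1 * 'X_i.

End VF.

(* Brackets of monomial fields x^a e_i and x^b e_k only shift exponents, so
   the question is combinatorial.  With A the shift matrix (A e_(k+1) = e_k)
   and B its transpose, both nilpotent hence traceless, repeated brackets
   with A x carry V_3 = e_m to every constant field e_k, and brackets of
   these with V_5 = x^m x, followed by brackets with B x, produce every
   off-diagonal linear field x_j e_i.  Those move exponents from one variable
   to any variable j <> k inside x^b e_k; applied to V_4 = (x^m)^2 e_1 and
   combined with the fields x_q x (obtained from V_5), they give every
   quadratic field.  Brackets with quadratic fields raise the degree of a
   monomial field, brackets with constant fields lower it, so every monomial
   field, and hence every polynomial field, lies in the Lie algebra. *)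

From HB Require Import structures.
From mathcomp Require Import all_boot all_order all_algebra.
From mathcomp Require Import reals.
From mathcomp Require Import mpoly.
From mathcomp Require Import zify.
From Stdlib Require Import FunctionalExtensionality.
Import Order.TTheory GRing.Theory Num.Theory.
Local Open Scope ring_scope.
Set Implicit Arguments.
Unset Strict Implicit.
Unset Printing Implicit Defensive.

(* Proves pointwise identities and inequalities between multinomials built from
   [U_(i)], [+] and truncated [-]. *)
Ltac mnm_lia :=
  intros; apply/mnmP => ?;
  repeat match goal with
  | H : is_true (leq _ _) |- _ => revert H
  | H : @eq nat _ _ |- _ => revert H
  end;
  rewrite ?(mnmDE, mnmBE, mnm1E, mnm0E);
  repeat (match goal with |- context [?a == ?b] =>
    let H := fresh "H" in case: (a =P b) => H; try subst end);
  simpl in *; intros; try congruence;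
  repeat match goal with
  | H : ~ (@eq (ordinal _) _ _) |- _ => clear H
  end; lia.

Section MultinomialDegree.
Variable n : nat.
Implicit Types g : 'X_{1..n}.

Lemma mdeg_subU g i : (0 < g i)%N -> mdeg (g - U_(i))%MM = (mdeg g).-1.
Proof.
move=> gi; have le : (U_(i) <= g)%MM.
  by apply/mnm_lepP => j; rewrite mnm1E; case: eqP => [<-|].
by rewrite -{2}(submK le) mdegD mdeg1 addn1.
Qed.

Lemma mdeg_gt0P g : (0 < mdeg g)%N -> exists i, (0 < g i)%N.
Proof.
move=> hg; case: (pickP (fun i => 0 < g i)%N) => [i gi|g0]; first by exists i.
suff g_eq0 : g = 0%MM by move: hg; rewrite g_eq0 mdeg0.
by apply/mnmP => i; rewrite mnm0E; move: (g0 i) => /=; lia.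
Qed.

Lemma mdeg_eq2 g : mdeg g = 2%N -> exists a b, g = (U_(a) + U_(b))%MM.
Proof.
move=> hg; have [a ga] : exists a, (0 < g a)%N by apply: mdeg_gt0P; rewrite hg.
have /mdeg1P[b /eqP gb] : mdeg (g - U_(a))%MM == 1%N by rewrite mdeg_subU // hg.
by exists a, b; rewrite -gb; move: ga; mnm_lia.
Qed.

Lemma mdeg_single g k : (forall i, i != k -> g i = 0%N) -> g k = mdeg g.
Proof.
by move=> g0; rewrite mdegE (bigD1 k) //= big1 ?addn0 // => i /g0.
Qed.

End MultinomialDegree.

Section LieClosure.
Variables (R : realType) (m : nat) (gens : seq (pvf R m)).
Local Notation L := (in_Lie gens).

Lemma in_Lie_ext U V : L U -> (forall i, U i = V i) -> L V.
Proof. by move=> hU eUV; have <- : U = V by apply: functional_extensionality. Qed.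

Lemma in_Lie_sub U V : L U -> L V -> L (fun i => U i - V i).
Proof.
move=> hU hV; apply: (in_Lie_ext (in_Lie_add hU (in_Lie_scale (-1) hV))) => i.
by rewrite scaleN1r.
Qed.

Lemma in_Lie_sum (I : Type) (r : seq I) (F : I -> pvf R m) :
  (forall x, L (F x)) -> L (fun i => \sum_(x <- r) F x i).
Proof.
move=> hF; elim: r => [|x r ih].
  by apply: (in_Lie_ext (in_Lie_zero gens)) => i; rewrite big_nil.
by apply: (in_Lie_ext (in_Lie_add (hF x) ih)) => i; rewrite big_cons.
Qed.

Lemma in_Lie_scaled (c : R) U V : L U -> c != 0 ->
  (forall i, U i = c *: V i) -> L V.
Proof.
move=> hU c0 eU; apply: (in_Lie_ext (in_Lie_scale c^-1 hU)) => i.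
by rewrite eU scalerA mulVf // scale1r.
Qed.

End LieClosure.

Section Monomials.
Variables (R : realType) (m : nat).
Local Notation pvf := (pvf R m).

Definition monomial_vf (g : 'X_{1..m}) (k : 'I_m) : pvf :=
  fun i => if i == k then 'X_[g] else 0.

Definition euler_mul (q : 'I_m) : pvf := fun i => 'X_[U_(i) + U_(q)].

Lemma sum_mul_if (F : 'I_m -> {mpoly R[m]}) k p :
  \sum_(j < m) F j * (if j == k then p else 0) = F k * p.
Proof.
rewrite (bigD1 k) //= eqxx big1 ?addr0 // => j /negbTE ->; exact: mulr0.
Qed.

Lemma mderivU (t j : 'I_m) : mderiv j ('X_[U_(t)] : {mpoly R[m]}) = (t == j)%:R.
Proof.
rewrite mderivX mnm1E; have [->|] := eqVneq t j; last by rewrite scale0r.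
by rewrite (_ : U_(j) - U_(j) = 0)%MM ?mpolyX0 ?scaler_nat //; mnm_lia.
Qed.

Lemma lie_bracket_monomial a i b k l :
  lie_bracket (monomial_vf a i) (monomial_vf b k) l =
  (if l == k then (b i)%:R *: 'X_[a + (b - U_(i))] else 0) -
  (if l == i then (a k)%:R *: 'X_[(a - U_(k)) + b] else 0).
Proof.
rewrite /lie_bracket /monomial_vf sumrB !sum_mul_if.
congr (_ - _); [case: (l == k) | case: (l == i)]; rewrite ?mderiv0 ?mul0r //.
  by rewrite mderivX -scalerAl mpolyXD mulrC.
by rewrite mderivX -scalerAl mpolyXD.
Qed.

Lemma linear_vf_delta i j l : linear_vf (delta_mx i j) l = monomial_vf U_(j) i l.
Proof.
rewrite /linear_vf /monomial_vf (bigD1 j) //= big1 ?addr0 => [|t /negbTE tj].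
  by rewrite mxE eqxx andbT; case: (l == i); rewrite ?scale1r ?scale0r.
by rewrite mxE tj andbF scale0r.
Qed.

Lemma linear_vfD (M N : 'M[R]_m) l :
  linear_vf (M + N) l = linear_vf M l + linear_vf N l.
Proof. by rewrite /linear_vf -big_split; apply: eq_bigr => j _; rewrite mxE scalerDl. Qed.

Lemma linear_vfZ a (M : 'M[R]_m) l : linear_vf (a *: M) l = a *: linear_vf M l.
Proof. by rewrite /linear_vf scaler_sumr; apply: eq_bigr => j _; rewrite mxE scalerA. Qed.

Lemma linear_vf1 l : linear_vf (1%:M : 'M[R]_m) l = 'X_l.
Proof.
rewrite /linear_vf (bigD1 l) //= big1 ?addr0 => [|t tl]; rewrite mxE.
  by rewrite eqxx scale1r.
by rewrite eq_sym (negbTE tl) scale0r.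
Qed.

Lemma mderiv_linear_vf (M : 'M[R]_m) l j : mderiv j (linear_vf M l) = (M l j)%:MP.
Proof.
rewrite /linear_vf linear_sum (bigD1 j) //= big1 ?addr0 => [|t /negbTE tj].
  by rewrite mderivZ mderivU eqxx -mul_mpolyC mulr1.
by rewrite mderivZ mderivU tj scaler0.
Qed.

Lemma lie_bracket_const_linear k (M : 'M[R]_m) l :
  lie_bracket (monomial_vf 0 k) (linear_vf M) l = (M l k)%:MP.
Proof.
rewrite /lie_bracket /monomial_vf sumrB sum_mul_if mderiv_linear_vf mpolyX0 mulr1.
rewrite big1 ?subr0 // => j _; case: (l == k); last by rewrite mderiv0 mul0r.
by rewrite -mpolyC1 mderivC mul0r.
Qed.

Lemma lie_bracket_linear (M N : 'M[R]_m) l :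
  lie_bracket (linear_vf M) (linear_vf N) l = linear_vf (N *m M - M *m N) l.
Proof.
rewrite /lie_bracket sumrB.
under eq_bigr => j _ do rewrite mderiv_linear_vf mul_mpolyC.
under [X in _ - X]eq_bigr => j _ do rewrite mderiv_linear_vf mul_mpolyC.
rewrite /linear_vf.
under [in RHS]eq_bigr => t _ do rewrite !mxE scalerBl !scaler_suml.
rewrite sumrB; congr (_ - _); rewrite exchange_big /=; apply: eq_bigr => j _;
  by rewrite scaler_sumr; apply: eq_bigr => t _; rewrite scalerA.
Qed.

Lemma lie_bracket_monomial_euler (j q l : 'I_m) :
  lie_bracket (monomial_vf U_(j) q) (euler_mul q) l = euler_mul j l.
Proof.
rewrite /lie_bracket sumrB sum_mul_if mderivX /euler_mul mpolyXD.
rewrite (_ : U_(l) + U_(q) - U_(q) = U_(l))%MM; last by mnm_lia.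
rewrite /monomial_vf mnmDE !mnm1E eqxx; have [->|lq] := eqVneq l q.
  rewrite (bigD1 j) //= big1 => [|t]; last first.
    by rewrite eq_sym mderivU => /negbTE ->; rewrite mul0r.
  rewrite mderivU eqxx mul1r addr0 mpolyXD -scalerAl mulrC scaler_nat.
  by rewrite mulr2n addrK.
rewrite big1 => [|t _]; last by rewrite mderiv0 mul0r.
by rewrite subr0 /= scale1r mulrC.
Qed.

End Monomials.

Section Generation.
Variables (R : realType) (m : nat) (gens : seq (pvf R m)).
Local Notation L := (in_Lie gens).
Local Notation monomial_vf := (@monomial_vf R m).

Hypothesis const_in : forall k, L (monomial_vf 0 k).
Hypothesis offdiag_in : forall i j, i != j -> L (monomial_vf U_(j) i).
Hypothesis euler_mul_in : forall q, L (euler_mul R q).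
Variables (c k0 : 'I_m).
Hypothesis ck0 : c != k0.
Hypothesis square_in : L (monomial_vf (U_(c) + U_(c)) k0).

Lemma monomial_move b k i j g : L (monomial_vf b k) -> i != j -> j != k ->
  (0 < b i)%N -> g = (U_(j) + (b - U_(i)))%MM -> L (monomial_vf g k).
Proof.
move=> hb ij jk bi ->.
apply: (in_Lie_scaled (c := (b i)%:R) (in_Lie_bracket (offdiag_in ij) hb)).
  by rewrite pnatr_eq0 -lt0n.
move=> l; rewrite lie_bracket_monomial mnm1E (negbTE jk) mulr0n scale0r.
by rewrite /monomial_vf; case: (l == k); case: (l == i); rewrite ?subr0 ?scaler0.
Qed.

Lemma quadratic_from_square s k a b :
  L (monomial_vf (U_(s) + U_(s)) k) -> (a = s \/ a != k) -> (b = s \/ b != k) ->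
  L (monomial_vf (U_(a) + U_(b)) k).
Proof.
move=> hs ha hb.
have has : L (monomial_vf (U_(a) + U_(s)) k).
  case: ha => [-> // | ak]; have [<- // | sa] := eqVneq s a.
  apply: (monomial_move hs sa ak); first by rewrite mnmDE mnm1E eqxx.
  by mnm_lia.
case: hb => [-> // | bk]; have [<- // | sb] := eqVneq s b.
apply: (monomial_move has sb bk); first by rewrite mnmDE !mnm1E eqxx addn1.
by mnm_lia.
Qed.

Lemma square_from_quadratics q k : q != k ->
  (forall i, i != k -> L (monomial_vf (U_(i) + U_(q)) k)) ->
  L (monomial_vf (U_(q) + U_(q)) q).
Proof.
move=> qk hq.
pose Y := monomial_vf (U_(k) + U_(q)) k.
pose w i : R := (1 + (q == i))%:R.
pose D i l := w i *: Y l - monomial_vf (U_(i) + U_(q)) i l.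
have D_in i : L (D i).
  have [->|ik] := eqVneq i k.
    apply: (in_Lie_ext (in_Lie_zero _)) => l.
    by rewrite /D /w (negbTE qk) addn0 scale1r subrr.
  apply: (in_Lie_ext (in_Lie_bracket (offdiag_in ik) (hq i ik))) => l.
  rewrite lie_bracket_monomial mnm1E eqxx mulr1n scale1r mnmDE !mnm1E eqxx.
  rewrite (_ : U_(k) + _ = U_(k) + U_(q))%MM; last by mnm_lia.
  rewrite (_ : U_(k) - U_(k) + _ = U_(i) + U_(q))%MM; last by mnm_lia.
  by rewrite /D /Y /w /monomial_vf; case: (l == k); rewrite ?scaler0.
(* [D i] is [x_k e_i, x_i x_q e_k] for [i != k] and [D k] = 0; summing them
   gives [(m + 1) Y - x_q x]. *)
have Y_in : L Y.
  apply: (in_Lie_scaled (c := m.+1%:R)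
    (in_Lie_add (euler_mul_in q) (in_Lie_sum (index_enum _) D_in))).
    by rewrite pnatr_eq0.
  move=> l; rewrite /D sumrB -scaler_suml.
  have -> : \sum_(i < m) monomial_vf (U_(i) + U_(q)) i l = euler_mul R q l.
    rewrite /monomial_vf (bigD1 l) //= eqxx big1 ?addr0 // => i.
    by rewrite eq_sym => /negbTE ->.
  rewrite addrC subrK; congr (_ *: _).
  rewrite /w (eq_bigr (fun i => 1 + (q == i)%:R)); last by move=> i _; rewrite natrD.
  rewrite big_split /= sumr_const card_ord (bigD1 q) //= eqxx big1 ?addr0.
    by rewrite -natr1.
  by move=> i /negbTE; rewrite eq_sym => ->.
apply: (in_Lie_ext (in_Lie_sub (in_Lie_scale 2%:R Y_in) (D_in q))) => l.
by rewrite /D /w eqxx opprB addrC subrK.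
Qed.

Lemma quadratic_in a b k : L (monomial_vf (U_(a) + U_(b)) k).
Proof.
have from_square s : L (monomial_vf (U_(s) + U_(s)) s) ->
    forall a b, L (monomial_vf (U_(a) + U_(b)) s).
  move=> hs a' b'; apply: quadratic_from_square hs _ _;
    [case: (eqVneq a' s) | case: (eqVneq b' s)]; by [left | right].
have square_ne q : q != k0 -> L (monomial_vf (U_(q) + U_(q)) q).
  move=> qk0; apply: square_from_quadratics (qk0) _ => i ik0.
  exact: quadratic_from_square square_in (or_intror ik0) (or_intror qk0).
apply: (from_square); have [->|kk0] := eqVneq k k0; last exact: square_ne.
apply: square_from_quadratics (c) _ _; first by rewrite eq_sym.
by move=> i _; apply: from_square; exact: square_ne.
Qed.

Section DegreeStep.
Variable d : nat.
Hypothesis d_ge2 : (2 <= d)%N.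
Hypothesis deg_d_in : forall g k, mdeg g = d -> L (monomial_vf g k).

Lemma monomial_deg_succ_mixed g k j : mdeg g = d.+1 -> j != k -> (0 < g j)%N ->
  L (monomial_vf g k).
Proof.
move=> hg jk gj; set b := (g - U_(j))%MM.
have b_in : L (monomial_vf b k) by apply: deg_d_in; rewrite mdeg_subU // hg.
case: (pickP (fun i => (i != k) && (0 < b i)%N)) => [i /andP[ik bi] | b_single].
  apply: (in_Lie_scaled (c := (b i)%:R)
    (in_Lie_bracket (quadratic_in i j i) b_in)); first by rewrite pnatr_eq0 -lt0n.
  move=> l; rewrite lie_bracket_monomial mnmDE !mnm1E (negbTE ik) (negbTE jk).
  rewrite mulr0n scale0r (_ : _ + (b - _) = g)%MM; last by move: gj bi; mnm_lia.
  by rewrite /monomial_vf; case: (l == k); case: (l == i); rewrite ?subr0 ?scaler0.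
have bk : b k = d.
  rewrite mdeg_single ?mdeg_subU ?hg // => i ik.
  by move: (b_single i); rewrite ik /=; lia.
apply: (in_Lie_scaled (c := d%:R - 1)
  (in_Lie_bracket (quadratic_in k j k) b_in)).
  by rewrite subr_eq0 pnatr_eq1; lia.
move=> l; rewrite lie_bracket_monomial bk mnmDE !mnm1E eqxx (negbTE jk) /=.
rewrite (_ : _ + (b - _) = g)%MM; last by move: gj bk; mnm_lia.
rewrite (_ : (_ - _) + b = g)%MM; last by move: gj; mnm_lia.
rewrite addn0 mulr1n /monomial_vf.
by case: (l == k); rewrite ?scalerBl ?scale1r ?scaler0 ?subr0.
Qed.

Lemma monomial_deg_succ g k : mdeg g = d.+1 -> L (monomial_vf g k).
Proof.
move=> hg.
case: (pickP (fun j => (j != k) && (0 < g j)%N)) => [j /andP[jk gj] | g_single].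
  exact: monomial_deg_succ_mixed hg jk gj.
have gk : g k = d.+1.
  by rewrite mdeg_single ?hg // => i ik; move: (g_single i); rewrite ik /=; lia.
pose j := if k == c then k0 else c.
have jk : j != k by rewrite /j; case: (eqVneq k c) => [->|kc]; rewrite eq_sym.
set a := (g - U_(k))%MM; set g' := (a - U_(k) + (U_(j) + U_(k)))%MM.
have ak : a k = d by rewrite mnmBE mnm1E eqxx gk subn1.
have a_deg : mdeg a = d by rewrite mdeg_subU ?gk // hg.
have a_in : L (monomial_vf a j) by exact: deg_d_in.
(* [x^a e_j, x_j x_k e_k] = x^g e_k - d x^g' e_j, and [x^g' e_j] is mixed. *)
have g'_in : L (monomial_vf g' j).
  apply: (@monomial_deg_succ_mixed _ _ k); last 2 first.
  - by rewrite eq_sym.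
  - by rewrite /g' !mnmDE !mnm1E eqxx; lia.
  rewrite /g' mdegD mdeg_subU ?ak; last lia.
  by rewrite a_deg mdegD !mdeg1; lia.
apply: (in_Lie_ext (in_Lie_add (in_Lie_bracket a_in (quadratic_in j k k))
  (in_Lie_scale d%:R g'_in))) => l.
rewrite lie_bracket_monomial ak mnmDE !mnm1E eqxx [k == j]eq_sym (negbTE jk) /=.
rewrite mulr1n scale1r.
rewrite (_ : a + _ = g)%MM; last by move: gk; mnm_lia.
rewrite /monomial_vf.
by case: (l == k); case: (l == j); rewrite ?scaler0 ?subrK ?subr0 ?addr0.
Qed.

End DegreeStep.

Lemma monomial_deg_pred d : (forall g k, mdeg g = d.+1 -> L (monomial_vf g k)) ->
  forall g k, mdeg g = d -> L (monomial_vf g k).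
Proof.
move=> deg_in g k hg.
have gk_in : L (monomial_vf (g + U_(k)) k).
  by apply: deg_in; rewrite mdegD mdeg1 hg addn1.
apply: (in_Lie_scaled (c := (g k).+1%:R) (in_Lie_bracket (const_in k) gk_in)).
  by rewrite pnatr_eq0.
move=> l; rewrite lie_bracket_monomial mnmDE mnm1E eqxx addn1 mnm0E mulr0n scale0r.
rewrite (_ : 0 + _ = g)%MM; last by mnm_lia.
by rewrite /monomial_vf; case: (l == k); rewrite ?subr0 ?scaler0.
Qed.

Lemma monomial_in g k : L (monomial_vf g k).
Proof.
have deg_ge2 d : forall g k, mdeg g = d.+2 -> L (monomial_vf g k).
  elim: d => [|d IH] g' k' hg'; last exact: monomial_deg_succ IH _ _ hg'.
  by have [a [b ->]] := mdeg_eq2 hg'; exact: quadratic_in.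
have deg_le e : forall d, (d + e = (mdeg g).+2)%N ->
    forall g k, mdeg g = d -> L (monomial_vf g k).
  elim: e => [|e IH] d hd; first by move: hd; rewrite addn0 => ->; exact: deg_ge2.
  by apply: monomial_deg_pred; apply: IH; rewrite addSnnS.
exact: (deg_le 2%N _ (addn2 _)).
Qed.

Theorem in_Lie_pvf (P : pvf R m) : L P.
Proof.
pose F k l := \sum_(g <- msupp (P k)) (P k)@_g *: monomial_vf g k l.
have F_in k : L (F k).
  by apply: in_Lie_sum => g; apply: in_Lie_scale; exact: monomial_in.
apply: (in_Lie_ext (in_Lie_sum (index_enum _) F_in)) => l.
rewrite (bigD1 l) //= big1 ?addr0 => [|k kl].
  by rewrite /F [RHS]mpolyE; apply: eq_bigr => g _; rewrite /monomial_vf eqxx.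
by rewrite /F big1 // => g _; rewrite /monomial_vf eq_sym (negbTE kl) scaler0.
Qed.

End Generation.

Section Proposition2.
Variables (R : realType) (p : nat).
Local Notation m := p.+2.
Local Notation monomial_vf := (@monomial_vf R m).

Definition shift_mx : 'M[R]_m := \matrix_(i, j) ((j : nat) == i.+1)%:R.

Lemma mxtrace_shift : \tr shift_mx = 0.
Proof. by rewrite /mxtrace big1 // => i _; rewrite mxE; case: eqP => //; lia. Qed.

Local Notation gens :=
  [:: linear_vf shift_mx; linear_vf shift_mx^T; @V3 R m; @V4 R m; @V5 R m].
Local Notation L := (in_Lie gens).
Local Notation LM M := (L (linear_vf (M : 'M[R]_m))).
Local Notation last := (@ord_max p.+1).

Lemma shift_in : LM shift_mx. Proof. by apply: in_Lie_gen; left. Qed.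
Lemma shiftT_in : LM shift_mx^T. Proof. by apply: in_Lie_gen; right; left. Qed.
Lemma V3_in : L (@V3 R m). Proof. by apply: in_Lie_gen; do 2 right; left. Qed.
Lemma V4_in : L (@V4 R m). Proof. by apply: in_Lie_gen; do 3 right; left. Qed.
Lemma V5_in : L (@V5 R m). Proof. by apply: in_Lie_gen; do 4 right; left. Qed.

Lemma coordX_last : @coordX R m m.-1 = 'X_last.
Proof.
rewrite /coordX; case: insubP => [i _ iE|] /=; last by rewrite ltnSn.
by congr ('X_ _); apply: val_inj.
Qed.

Lemma V5E l : @V5 R m l = euler_mul R last l.
Proof. by rewrite /V5 /euler_mul coordX_last mpolyXD mulrC. Qed.

Lemma const_in k : L (monomial_vf 0 k).
Proof.
suff const_from_top d (k' : 'I_m) : (k' + d = p.+1)%N -> L (monomial_vf 0 k').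
  by apply: (const_from_top (p.+1 - k)%N); have := ltn_ord k; lia.
elim: d k' => [|d IH] k' hk'.
  apply: (in_Lie_ext V3_in) => i; rewrite /V3 /monomial_vf mpolyX0.
  by rewrite (_ : (i == k') = (val i == m.-1)) // -val_eqE /=; lia.
have k'1 : (k'.+1 < m)%N by lia.
apply: (in_Lie_ext (in_Lie_bracket (IH (Ordinal k'1) _) shift_in)) => [|l].
  by rewrite /=; lia.
rewrite lie_bracket_const_linear mxE /= eqSS /monomial_vf mpolyX0 -val_eqE eq_sym.
by case: (_ == _); rewrite ?mpolyC1 ?mpolyC0.
Qed.

Lemma lie_bracket_const_V5 k l :
  lie_bracket (monomial_vf 0 k) (@V5 R m) l =
  linear_vf (delta_mx k last + (k == last)%:R *: 1%:M) l.
Proof.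
rewrite linear_vfD linear_vfZ linear_vf_delta linear_vf1.
rewrite /lie_bracket /monomial_vf /V5 coordX_last sumrB sum_mul_if big1 ?subr0.
  rewrite mpolyX0 mulr1 mderivM !mderivU [last == k]eq_sym addrC.
  by case: (l == k); case: (k == last);
    rewrite /= ?mulr1n ?mulr0n ?mulr1 ?mulr0 ?mul1r ?mul0r ?scale1r ?scale0r ?addr0 ?add0r.
move=> j _; case: (l == k); last by rewrite mderiv0 mul0r.
by rewrite mpolyX0 -mpolyC1 mderivC mul0r.
Qed.

Lemma LM_bracket M N : LM M -> LM N -> LM (N *m M - M *m N).
Proof.
move=> hM hN; apply: (in_Lie_ext (in_Lie_bracket hM hN)) => l.
by rewrite lie_bracket_linear.
Qed.

Lemma LM_oppr M : LM (- M) -> LM M.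
Proof.
move=> hM; apply: (in_Lie_scaled (c := -1) hM); first by rewrite oppr_eq0 oner_eq0.
by move=> l; rewrite -linear_vfZ scaleN1r.
Qed.

Lemma LM_delta_col k : k != last -> LM (delta_mx k last).
Proof.
move=> /negbTE kl; apply: (in_Lie_ext (in_Lie_bracket (const_in k) V5_in)) => l.
by rewrite lie_bracket_const_V5 kl scale0r addr0.
Qed.

Lemma delta_mul_shiftT (i j j1 : 'I_m) : val j1 = (val j).+1 ->
  delta_mx i j1 *m shift_mx^T = delta_mx i j.
Proof.
move=> j1E; apply/matrixP => a b.
rewrite !mxE (bigD1 j1) //= big1 ?addr0 => [|t /negbTE tj1].
  rewrite !mxE eqxx andbT j1E eqSS val_eqE [j == b]eq_sym.
  by case: (a == i); case: (b == j); rewrite ?mulr1 ?mulr0.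
by rewrite !mxE tj1 andbF mul0r.
Qed.

Lemma shiftT_mul_delta_last (j : 'I_m) : shift_mx^T *m delta_mx last j = 0.
Proof.
apply/matrixP => a b; rewrite !mxE big1 // => t _; rewrite !mxE.
have [tl|] := eqVneq t last; last by rewrite mulr0.
rewrite tl /=; case: eqP => [aE|]; last by rewrite mul0r.
by have := ltn_ord a; rewrite aE ltnn.
Qed.

Lemma LM_delta_row j : j != last -> LM (delta_mx last j).
Proof.
have step (s : R) (j' j1 : 'I_m) : val j1 = (val j').+1 ->
    LM (delta_mx last j1 + s *: 1%:M) -> LM (delta_mx last j').
  move=> j1E hM; apply: LM_oppr.
  have := LM_bracket hM shiftT_in; rewrite mulmxDr mulmxDl -scalemxAr -scalemxAl.
  rewrite mulmx1 mul1mx shiftT_mul_delta_last (delta_mul_shiftT _ j1E) add0r.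
  by rewrite opprD addrCA subrr addr0.
suff row_from_top d (j' : 'I_m) : (j' + d = p)%N -> LM (delta_mx last j').
  rewrite -val_eqE /= => jl; apply: (row_from_top (p - j)%N).
  by have := ltn_ord j; lia.
elim: d j' => [|d IH] j' hj'; have j'1 : (j'.+1 < m)%N by lia.
  apply: (step 1 j' (Ordinal j'1)) => //.
  have -> : Ordinal j'1 = last by apply: val_inj => /=; lia.
  apply: (in_Lie_ext (in_Lie_bracket (const_in last) V5_in)) => l.
  by rewrite lie_bracket_const_V5 eqxx.
apply: (step 0 j' (Ordinal j'1)) => //; rewrite scale0r addr0; apply: IH => /=; lia.
Qed.

Lemma offdiag_in i j : i != j -> L (monomial_vf U_(j) i).
Proof.
move=> ij; suff : LM (delta_mx i j).
  by move/in_Lie_ext; apply => l; rewrite linear_vf_delta.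
have [il|il] := eqVneq i last.
  by rewrite il; apply: LM_delta_row; rewrite -il eq_sym.
have [jl|jl] := eqVneq j last; first by rewrite jl; exact: LM_delta_col.
apply: LM_oppr; have := LM_bracket (LM_delta_col il) (LM_delta_row jl).
by rewrite mul_delta_mx_0 1?eq_sym // mul_delta_mx sub0r.
Qed.

Lemma euler_mul_in q : L (euler_mul R q).
Proof.
have V5_euler : L (euler_mul R last) by apply: (in_Lie_ext V5_in); exact: V5E.
have [->|ql] := eqVneq q last; first exact: V5_euler.
have lq : last != q by rewrite eq_sym.
apply: (in_Lie_ext (in_Lie_bracket (offdiag_in lq) V5_euler)).
exact: lie_bracket_monomial_euler.
Qed.

Lemma V4E l : @V4 R m l = monomial_vf (U_(last) + U_(last)) ord0 l.
Proof.
rewrite /V4 /monomial_vf mpolyXD coordX_last expr2.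
by rewrite (_ : (l == ord0) = (val l == 0%N)) // -val_eqE.
Qed.

Lemma in_Lie_gens (P : pvf R m) : L P.
Proof.
apply: (@in_Lie_pvf _ _ _ const_in offdiag_in euler_mul_in last ord0).
  by rewrite -val_eqE.
by apply: (in_Lie_ext V4_in); exact: V4E.
Qed.

End Proposition2.

Theorem proposition2 (R : realType) (m : nat) (hm : (2 <= m)%N) :
  exists A B : 'M[R]_m,
    \tr A = 0 /\ \tr B = 0 /\
    forall P : pvf R m,
      in_Lie [:: linear_vf A; linear_vf B; @V3 R m; @V4 R m; @V5 R m] P.
Proof.
case: m hm => [|[|p]] // _.
exists (shift_mx R p), (shift_mx R p)^T.
by rewrite mxtrace_tr mxtrace_shift; split=> //; split=> //; exact: in_Lie_gens.
Qed.
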